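(* Let $\mathcal{G}=(\Delta,E)$ be a connected undirected graph, let $K=(k_{ij})\in\mathcal{M}^+(\mathcal{G})$, and let $C$ be a maximal clique of $\mathcal{G}$. Let $\mathcal{G}^*$ be a chordal extension of $\mathcal{G}$, and let $C^*_1,\dots,C^*_M$ be a perfect sequence of the maximal cliques of $\mathcal{G}^*$ with $C\subseteq C^*_1$. Put $S^*_m:=C^*_m\cap(C^*_1\cup\dots\cup C^*_{m-1})$ for $m=2,\dots,M$, $R^*_1:=C^*_1\setminus C$ and $R^*_m:=C^*_m\setminus S^*_m$ for $m=2,\dots,M$. Let $\delta_1,\dots,\delta_N$ ($N=|\Delta\setminus C|$) be an enumeration of $\Delta\setminus C$ that lists first all vertices of $R^*_M$ (in any order), then all vertices of $R^*_{M-1}$, and so on, ending with the vertices of $R^*_1$. Define symmetric matrices $K^{(0)}:=K$ and, for $i=1,\dots,N$, with $\delta:=\delta_i$, $m$ the index with $\delta\in R^*_m$, and $Q:=C^*_m\setminus\{\delta_1,\dots,\delta_i\}$, let $K^{(i)}$ be obtained from $K^{(i-1)}=(k^{(i-1)}_{ab})$ by replacing the block indexed by $Q\times Q$ with $$K^{(i-1)}_{QQ}-\bigl(k^{(i-1)}_{\delta\delta}\bigr)^{-1}K^{(i-1)}_{Q\delta}K^{(i-1)}_{\delta Q},$$ all other entries unchanged. Then $k^{(i-1)}_{\delta_i\delta_i}>0$ for every $i$ (so the procedure is well defined), and $$K^{(N)}_{CC}=\bigl((K^{-1})_{CC}\bigr)^{-1}.$$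
   Context: For a graph $\mathcal{G}=(\Delta,E)$, $\mathcal{M}^+(\mathcal{G})$ denotes the set of $|\Delta|\times|\Delta|$ real symmetric positive definite matrices $K=(k_{ij})$ with $k_{ij}=0$ whenever $i\neq j$ and $\{i,j\}\notin E$. For a matrix $A$ indexed by $\Delta$ and subsets $\Delta_1,\Delta_2\subseteq\Delta$, $A_{\Delta_1\Delta_2}$ denotes the submatrix with rows in $\Delta_1$ and columns in $\Delta_2$; $(K^{-1})_{CC}$ is the $C\times C$ submatrix of the inverse of $K$. A chordal extension of $\mathcal{G}$ is a chordal graph on the same vertex set $\Delta$ whose edge set contains $E$. A sequence $C^*_1,\dots,C^*_M$ of all maximal cliques of a chordal graph is a perfect sequence if for every $m=2,\dots,M$ there is $m'<m$ with $C^*_{m'}\supseteq C^*_m\cap(C^*_1\cup\dots\cup C^*_{m-1})$. A clique is a set of pairwise adjacent vertices. *)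

(* Vertex set Delta = 'I_n; matrices over a realFieldType R. *)
From HB Require Import structures.
From mathcomp Require Import all_boot all_order all_algebra.
Set Implicit Arguments. Unset Strict Implicit. Unset Printing Implicit Defensive.
Import Order.TTheory GRing.Theory Num.Theory.

Section Graphs.
Variable n : nat.
Implicit Types (e : rel 'I_n) (C D : {set 'I_n}).

Definition simple_graph e := symmetric e /\ irreflexive e.

Definition connected_graph e := forall x y : 'I_n, connect e x y.

Definition is_clique e C := forall x y, x \in C -> y \in C -> x != y -> e x y.

Definition maximal_clique e C :=
  is_clique e C /\ (forall D, is_clique e D -> C \subset D -> D = C).

Definition chordal e :=
  forall s : seq 'I_n, 4 <= size s -> uniq s -> cycle e s ->
    exists x y, [/\ (x \in s) && (y \in s), x != y, y != next s x, x != next s y & e x y].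

Definition chordal_extension e e' :=
  simple_graph e' /\ subrel e e' /\ chordal e'.

(* C^*_m (0-based indexing: Cs`_0 is C^*_1) *)
Definition Cst (Cs : seq {set 'I_n}) m := nth set0 Cs m.

Definition perfect_sequence e' (Cs : seq {set 'I_n}) :=
  [/\ uniq Cs,
      (forall X, X \in Cs <-> maximal_clique e' X) &
      forall m, 0 < m < size Cs ->
        exists2 m', m' < m &
          Cst Cs m :&: \bigcup_(j < m) Cst Cs j \subset Cst Cs m'].

(* S^*_m, for m >= 1 (0-based) *)
Definition Sst (Cs : seq {set 'I_n}) m := Cst Cs m :&: \bigcup_(j < m) Cst Cs j.

Definition Rst C (Cs : seq {set 'I_n}) m :=
  if m == 0 then Cst Cs 0 :\: C else Cst Cs m :\: Sst Cs m.

(* the index m with x \in R^*_m (the R^*_m partition Delta \ C) *)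
Definition blk C (Cs : seq {set 'I_n}) (x : 'I_n) :=
  find (fun m => x \in Rst C Cs m) (iota 0 (size Cs)).
End Graphs.

Section Matrices.
Variables (R : realFieldType) (n : nat).
Local Open Scope ring_scope.

Definition pos_def (K : 'M[R]_n) :=
  K^T = K /\ forall x : 'cV[R]_n, x != 0 -> 0 < (x^T *m K *m x) 0 0.

Definition in_Mplus (e : rel 'I_n) (K : 'M[R]_n) :=
  pos_def K /\ forall i j, i != j -> ~~ e i j -> K i j = 0.

Definition subCC (C : {set 'I_n}) (A : 'M[R]_n) : 'M[R]_#|C| :=
  \matrix_(i < #|C|, j < #|C|) A (enum_val i) (enum_val j).

Definition elim_step (K : 'M[R]_n) (d : 'I_n) (Q : {set 'I_n}) : 'M[R]_n :=
  \matrix_(a, b) if (a \in Q) && (b \in Q)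
                 then K a b - (K d d)^-1 * K a d * K d b else K a b.

(* pre = already eliminated vertices; Q = C^*_m \ {delta_1..delta_i} *)
Fixpoint elim_rec (C : {set 'I_n}) (Cs : seq {set 'I_n}) (K : 'M[R]_n)
   (pre s : seq 'I_n) : 'M[R]_n :=
  match s with
  | [::] => K
  | d :: s' =>
      let pre' := rcons pre d in
      elim_rec C Cs (elim_step K d (Cst Cs (blk C Cs d) :\: [set x in pre'])) pre' s'
  end.

Definition Kseq C Cs (K : 'M[R]_n) (ds : seq 'I_n) (i : nat) :=
  elim_rec C Cs K [::] (take i ds).
End Matrices.

From HB Require Import structures.
From mathcomp Require Import all_boot all_order all_algebra.
Import Order.TTheory GRing.Theory Num.Theory.
Set Implicit Arguments. Unset Strict Implicit. Unset Printing Implicit Defensive.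

(* Write P := K^-1 and U_i := Delta \ {delta_1, ..., delta_i}.  By induction
   on i, K^(i) restricted to U_i x U_i is the inverse of P_{U_i U_i}, is
   symmetric, and vanishes off the edges of the chordal extension G^*. *)

Section Cliques.
Variables (n : nat) (e' : rel 'I_n).

(* Boolean version of [is_clique], so that [maxset] can be used. *)
Definition cliqueb : pred {set 'I_n} :=
  fun D => [forall x in D, forall y in D, (x != y) ==> e' x y].

Lemma cliqueP D : reflect (is_clique e' D) (cliqueb D).
Proof.
apply: (iffP forall_inP) => [cD x y xD yD xy | cD x xD].
  by have /forall_inP/(_ y yD)/implyP := cD x xD; apply.
by apply/forall_inP => y yD; apply/implyP; apply: cD.
Qed.

Lemma clique_in_maximal D :
  is_clique e' D -> exists2 X, maximal_clique e' X & D \subset X.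
Proof.
move/cliqueP=> cD; have [X /maxsetP [/cliqueP cX maxX] DX] := maxset_exists cD.
by exists X => //; split=> // Y /cliqueP; apply: maxX.
Qed.

Lemma sub_clique (D X : {set 'I_n}) :
  D \subset X -> is_clique e' X -> is_clique e' D.
Proof. by move=> DX cX x y xD yD; apply: cX; apply: (subsetP DX). Qed.
End Cliques.

Section PerfectSequence.
Variables (n : nat) (e' : rel 'I_n) (Cs : seq {set 'I_n}) (C : {set 'I_n}).
Hypothesis perfectCs : perfect_sequence e' Cs.

Lemma Cst_clique m : m < size Cs -> is_clique e' (Cst Cs m).
Proof.
by case: perfectCs => _ maxCs _ mCs; case: (maxCs (Cst Cs m)).1; rewrite ?mem_nth.
Qed.

Lemma clique_in_Cs D : is_clique e' D -> exists2 j, j < size Cs & D \subset Cst Cs j.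
Proof.
case: perfectCs => _ maxCs _ /clique_in_maximal[X /maxCs XCs DX].
by exists (index X Cs); rewrite ?index_mem // /Cst nth_index.
Qed.

Lemma Rst_sub m : Rst C Cs m \subset Cst Cs m.
Proof. by rewrite /Rst; case: eqP => [->|_]; apply: subsetDl. Qed.

Lemma Rst_not_earlier m k x : x \in Rst C Cs m -> k < m -> x \notin Cst Cs k.
Proof.
rewrite /Rst; case: eqP => [-> //|_] /setDP[xm xS] km.
by apply: contra xS => xk; rewrite /Sst inE xm; apply/bigcupP; exists (Ordinal km).
Qed.

Lemma blk_spec x : x \notin C -> blk C Cs x < size Cs /\ x \in Rst C Cs (blk C Cs x).
Proof.
move=> xC.
have [j js xj] : exists2 j, j < size Cs & [set x] \subset Cst Cs j.
  by apply: clique_in_Cs => a b; rewrite !inE => /eqP -> /eqP ->; rewrite eqxx.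
have ex : exists j, (j < size Cs) && (x \in Cst Cs j).
  by exists j; rewrite js -sub1set.
case: (ex_minnP ex) => j0 /andP[j0s xj0] minj.
have hasR : has (fun m => x \in Rst C Cs m) (iota 0 (size Cs)).
  apply/hasP; exists j0; first by rewrite mem_iota.
  rewrite /Rst; case: eqP => [j0E|_]; first by rewrite inE xC -j0E.
  rewrite inE xj0 andbT /Sst inE xj0 /=; apply/bigcupP => -[k _ xk].
  have := minj k; rewrite xk (ltn_trans (ltn_ord k) j0s) => /(_ isT).
  by rewrite leqNgt ltn_ord.
have blk_lt : blk C Cs x < size Cs by move: hasR; rewrite has_find size_iota.
by split=> //; have := nth_find 0 hasR; rewrite nth_iota.
Qed.

Hypothesis sym_e' : symmetric e'.

(* If d lies in R^*_m and is adjacent to a vertex y of some clique C^*_k with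
   k <= m, then y already lies in C^*_m: the edge {d, y} sits in some clique
   C^*_j, and while j > m the perfect-sequence property moves both endpoints
   (which also lie in earlier cliques) to a clique of smaller index. *)
Lemma neighbour_in_block m k d y : d \in Rst C Cs m -> k <= m ->
  y \in Cst Cs k -> e' d y -> y \in Cst Cs m.
Proof.
move=> dR km yk edy.
have [j js dyj] : exists2 j, j < size Cs & [set d; y] \subset Cst Cs j.
  apply: clique_in_Cs => a b; rewrite !inE.
  by case/orP=> /eqP-> /orP[]/eqP->; rewrite ?eqxx // sym_e'.
have dj : d \in Cst Cs j by apply: (subsetP dyj); rewrite !inE eqxx.
have yj : y \in Cst Cs j by apply: (subsetP dyj); rewrite !inE eqxx orbT.
have dm : d \in Cst Cs m by apply: (subsetP (Rst_sub m)).
elim/ltn_ind: j js dj yj {dyj} => j IH js dj yj.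
case: (ltngtP j m) => [jm|mj|<- //].
  by rewrite (negPf (Rst_not_earlier dR jm)) in dj.
case: perfectCs => _ _ /(_ j); rewrite js (leq_ltn_trans (leq0n m) mj).
case=> // j' j'j sep; have in_sep z i : i < j -> z \in Cst Cs i ->
    z \in Cst Cs j -> z \in Cst Cs j'.
  move=> ij zi zj; apply: (subsetP sep).
  by rewrite inE zj; apply/bigcupP; exists (Ordinal ij).
apply: (IH j') => //; first exact: ltn_trans js.
  exact: (in_sep d m).
exact: (in_sep y k (leq_ltn_trans km mj)).
Qed.

Section EliminationOrder.
Hypothesis C_first : C \subset Cst Cs 0.
Variable ds : seq 'I_n.
Hypothesis ds_mem : forall x, (x \in ds) = (x \notin C).
Hypothesis ds_order : pairwise (fun x y => blk C Cs y <= blk C Cs x) ds.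

(* The i-th eliminated vertex d is adjacent (in the chordal extension) only to
   already eliminated vertices and to vertices of its own clique C^*_(blk d):
   the remaining vertices lie in C or in blocks R^*_k with k <= blk d. *)
Lemma remaining_neighbour_in_block x0 i a : i < size ds ->
  a \notin take i.+1 ds -> e' (nth x0 ds i) a ->
  a \in Cst Cs (blk C Cs (nth x0 ds i)).
Proof.
move=> ids a_left eda; set d := nth x0 ds i.
have dC : d \notin C by rewrite -ds_mem mem_nth.
have [_ dR] := blk_spec dC.
suff [k kd ak] : exists2 k, k <= blk C Cs d & a \in Cst Cs k.
  exact: neighbour_in_block dR kd ak eda.
have [aC|aC] := boolP (a \in C); first by exists 0 => //; apply: (subsetP C_first).
have [_ aR] := blk_spec aC; exists (blk C Cs a); last exact: (subsetP (Rst_sub _)).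
have a_ds : a \in ds by rewrite ds_mem.
have i_lt_a : i < index a ds.
  by move: a_left; rewrite in_take ?index_mem // -leqNgt.
have := (pairwiseP x0 ds_order) i (index a ds); rewrite nth_index //.
by apply; rewrite ?inE ?index_mem // (ltn_trans i_lt_a) ?index_mem.
Qed.
End EliminationOrder.
End PerfectSequence.

Local Open Scope ring_scope.

Section PositiveDefinite.
Variables (R : realFieldType) (n : nat) (K : 'M[R]_n).
Hypothesis Kpd : pos_def K.

Lemma posdef_unitmx : K \in unitmx.
Proof.
case: Kpd => _ Kpos; rewrite unitmxE unitfE; apply/negP => /det0P[v v0 vK].
have vT0 : v^T != 0 by apply: contraNneq v0 => vT0; rewrite -[v]trmxK vT0 trmx0.
by have := Kpos _ vT0; rewrite trmxK vK mul0mx mxE ltxx.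
Qed.

(* x^T K^-1 x = y^T K y for y = K^-1 x, so K^-1 is positive definite too. *)
Lemma posdef_invmx : pos_def (invmx K).
Proof.
case: Kpd => Ksym Kpos; have Ku := posdef_unitmx.
have invKsym : (invmx K)^T = invmx K by rewrite trmx_inv Ksym.
split=> // x x0; have y0 : invmx K *m x != 0.
  by apply: contraNneq x0 => y0; rewrite -(mulKVmx Ku x) y0 mulmx0.
have := Kpos _ y0; rewrite trmx_mul invKsym -!mulmxA (mulmxA K) (mulmxV Ku).
by rewrite mul1mx mulmxA.
Qed.
End PositiveDefinite.

Section SchurComplement.
Variables (R : realFieldType) (n : nat) (P : 'M[R]_n).
Implicit Types (S T : 'M[R]_n) (U Q : {set 'I_n}).

Definition inverse_on S U := forall a c, a \in U -> c \in U ->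
  \sum_(b in U) S a b * P b c = (a == c)%:R.

Definition symmetric_on S U := forall a b, a \in U -> b \in U -> S a b = S b a.

Definition supported_on (e' : rel 'I_n) S U := forall a b, a \in U -> b \in U ->
  a != b -> ~~ e' a b -> S a b = 0.

Definition elim_invariant e' S U :=
  [/\ inverse_on S U, symmetric_on S U & supported_on e' S U].

(* The diagonal of the inverse of a principal block of a positive definite
   matrix is positive: with z := S_{.d} on U, z^T P z = S_dd. *)
Lemma inverse_on_diag_pos S U d : pos_def P -> inverse_on S U ->
  symmetric_on S U -> d \in U -> 0 < S d d.
Proof.
move=> [Psym Ppos] Sinv Ssym dU.
pose z : 'cV[R]_n := \col_b (if b \in U then S b d else 0).
have Pz c : c \in U -> (P *m z) c 0 = (d == c)%:R.
  move=> cU; rewrite -(Sinv d c dU cU) mxE [RHS]big_mkcond /=.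
  apply: eq_bigr => b _; rewrite mxE; case: ifP => bU; last by rewrite mulr0.
  by rewrite (Ssym b d bU dU) mulrC -{1}Psym mxE.
have z0 : z != 0.
  apply: contra_neq (oner_neq0 R) => z0.
  by have := Pz d dU; rewrite z0 mulmx0 mxE eqxx.
have := Ppos z z0; rewrite -mulmxA mxE.
have -> : \sum_j z^T 0 j * (P *m z) j 0 = \sum_(c in U) S c d * (d == c)%:R.
  rewrite [RHS]big_mkcond /=; apply: eq_bigr => c _; rewrite [z^T 0 c]mxE [z c 0]mxE.
  by case: ifP => cU; [rewrite Pz | rewrite mul0r].
rewrite (bigD1 d) //= eqxx mulr1 big1 ?addr0 // => c /andP[_ cd].
by rewrite eq_sym (negPf cd) mulr0.
Qed.

Lemma schur_inverse_on S T U d : inverse_on S U -> d \in U -> S d d != 0 ->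
  (forall a b, a \in U :\ d -> b \in U :\ d ->
     T a b = S a b - (S d d)^-1 * S a d * S d b) ->
  inverse_on T (U :\ d).
Proof.
move=> Sinv dU Sdd0 TE a c aU' cU'.
have [ad aU] := setD1P aU'; have [cd cU] := setD1P cU'.
have split_d (F : 'I_n -> R) : \sum_(b in U) F b = F d + \sum_(b in U :\ d) F b.
  by rewrite (bigD1 d) //=; congr (_ + _); apply: eq_bigl => b; rewrite !inE andbC.
have dc : (d == c) = false by rewrite eq_sym; apply: negPf.
have row_a := Sinv a c aU cU; have row_d := Sinv d c dU cU.
rewrite split_d in row_a; rewrite split_d dc addrC in row_d.
rewrite (eq_bigr (fun b => S a b * P b c - (S d d)^-1 * S a d * (S d b * P b c)));
  last by move=> b bU'; rewrite TE // mulrBl -!mulrA.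
have sum_d : \sum_(b in U :\ d) S d b * P b c = - (S d d * P d c).
  by apply/eqP; rewrite -addr_eq0 row_d.
rewrite sumrB -mulr_sumr sum_d -row_a mulrN opprK -mulrA (mulrCA (S a d)).
by rewrite mulKf // addrC.
Qed.

Section EliminationStep.
Variables (e' : rel 'I_n) (S : 'M[R]_n) (U Q : {set 'I_n}) (d : 'I_n).
Hypotheses (sym_e' : symmetric e') (dU : d \in U).
Hypothesis neighbours_in_Q : forall a, a \in U :\ d -> e' d a -> a \in Q.

(* When S_UU is supported on e', the update restricted to Q x Q is the full
   Schur complement update on U \ {d}: outside Q the correction term vanishes. *)
Lemma elim_step_schur : symmetric_on S U -> supported_on e' S U ->
  forall a b, a \in U :\ d -> b \in U :\ d ->
  elim_step S d Q a b = S a b - (S d d)^-1 * S a d * S d b.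
Proof.
move=> Ssym Ssupp a b /setD1P[ad aU] /setD1P[bd bU].
have S_d0 x : x \in U :\ d -> x \notin Q -> S d x = 0.
  move=> xU' xQ; have [xd xU] := setD1P xU'.
  by apply: Ssupp; rewrite // 1?eq_sym //; apply: contra xQ; apply: neighbours_in_Q.
rewrite mxE; case: ifP => // /negbT; rewrite negb_and => /orP[aQ|bQ].
  by rewrite (Ssym a d) // (S_d0 a) ?inE ?ad // mulr0 mul0r subr0.
by rewrite (S_d0 b) ?inE ?bd // mulr0 subr0.
Qed.

Lemma elim_step_invariant : elim_invariant e' S U -> 0 < S d d ->
  is_clique e' Q -> elim_invariant e' (elim_step S d Q) (U :\ d).
Proof.
move=> [Sinv Ssym Ssupp] Sdd Qclique; have E := elim_step_schur Ssym Ssupp.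
have sub_U x : x \in U :\ d -> x \in U by case/setD1P.
split.
- by apply: schur_inverse_on Sinv dU (lt0r_neq0 Sdd) E.
- move=> a b aU bU; rewrite !E // (Ssym a b) ?sub_U //.
  by rewrite (Ssym a d (sub_U a aU) dU) (Ssym b d (sub_U b bU) dU) mulrAC.
- move=> a b aU bU ab nab; rewrite mxE; case: ifP => [/andP[aQ bQ]|_].
    by rewrite (Qclique a b aQ bQ ab) in nab.
  by apply: Ssupp; rewrite ?sub_U.
Qed.
End EliminationStep.
End SchurComplement.

Lemma elim_rec_cat (R : realFieldType) n (C : {set 'I_n}) Cs (K : 'M[R]_n) pre s t :
  elim_rec C Cs K pre (s ++ t) = elim_rec C Cs (elim_rec C Cs K pre s) (pre ++ s) t.
Proof. by elim: s K pre => [|d s IH] K pre /=; rewrite ?cats0 // IH cat_rcons. Qed.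

Lemma Kseq_succ (R : realFieldType) n (C : {set 'I_n}) Cs (K : 'M[R]_n)
    (ds : seq 'I_n) x0 i : (i < size ds)%N ->
  Kseq C Cs K ds i.+1 = elim_step (Kseq C Cs K ds i) (nth x0 ds i)
    (Cst Cs (blk C Cs (nth x0 ds i)) :\: [set x in take i.+1 ds]).
Proof. by move=> ids; rewrite /Kseq (take_nth x0 ids) -cats1 elim_rec_cat cats1. Qed.

Lemma subCC_inverse_on (R : realFieldType) n (P S : 'M[R]_n) C :
  inverse_on P S C -> subCC C S = invmx (subCC C P).
Proof.
move=> SPinv; have SP : subCC C S *m subCC C P = 1%:M.
  apply/matrixP => i k; rewrite !mxE; under eq_bigr do rewrite !mxE.
  rewrite -(big_enum_val (A := mem C) (fun b => S (enum_val i) b * P b (enum_val k))).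
  by rewrite SPinv ?enum_valP // (inj_eq enum_val_inj).
have [_ Pu] := mulmx1_unit SP.
by rewrite -[LHS]mulmx1 -(mulmxV Pu) mulmxA SP mul1mx.
Qed.

Section Elimination.
Variables (R : realFieldType) (n : nat) (e e' : rel 'I_n) (K : 'M[R]_n).
Variables (C : {set 'I_n}) (Cs : seq {set 'I_n}) (ds : seq 'I_n).
Hypotheses (KMplus : in_Mplus e K) (sub_e : subrel e e') (sym_e' : symmetric e').
Hypotheses (perfectCs : perfect_sequence e' Cs) (C_first : C \subset Cst Cs 0).
Hypotheses (uniq_ds : uniq ds) (ds_mem : forall x, (x \in ds) = (x \notin C)).
Hypothesis ds_order : pairwise (fun x y => (blk C Cs y <= blk C Cs x)%N) ds.

Local Notation remaining i := (~: [set x in take i ds]).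

Lemma remaining_succ x0 i : (i < size ds)%N ->
  nth x0 ds i \in remaining i /\ remaining i.+1 = remaining i :\ nth x0 ds i.
Proof.
move=> ids; split; first by rewrite !inE in_take ?mem_nth // index_uniq // ltnn.
by apply/setP => x; rewrite (take_nth x0 ids) !inE mem_rcons in_cons negb_or.
Qed.

Lemma Kseq_invariant i : (i <= size ds)%N ->
  elim_invariant (invmx K) e' (Kseq C Cs K ds i) (remaining i).
Proof.
case: KMplus => Kpd Ksupp; have Ku := posdef_unitmx Kpd.
elim: i => [_|i IH ids].
  have -> : remaining 0 = setT by apply/setP => x; rewrite take0 !inE.
  rewrite /Kseq take0 /=.
  split=> [a c _ _|a b _ _|a b _ _ ab nab].
  - have := congr1 (fun M : 'M[R]_n => M a c) (mulmxV Ku); rewrite !mxE => <-.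
    by apply: eq_bigl => b; rewrite inE.
  - by case: Kpd => Ksym _; rewrite -{1}Ksym mxE.
  - by apply: Ksupp ab _; apply: contra nab; apply: sub_e.
have x0 : 'I_n by case: ds ids => [|x _] //; exact: x.
have [dU Usucc] := remaining_succ x0 ids; have invK := IH (ltnW ids).
rewrite Usucc (Kseq_succ _ _ _ x0 ids); apply: elim_step_invariant => //.
- move=> a; rewrite -Usucc !inE => a_left eda.
  by rewrite a_left (remaining_neighbour_in_block perfectCs sym_e' C_first ds_mem).
- case: invK => Sinv Ssym _.
  exact: inverse_on_diag_pos (posdef_invmx Kpd) Sinv Ssym dU.
- have dC : nth x0 ds i \notin C by rewrite -ds_mem mem_nth.
  have [blk_lt _] := blk_spec perfectCs dC.
  exact: sub_clique (subsetDl _ _) (Cst_clique perfectCs blk_lt).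
Qed.

Lemma Kseq_pivot_pos x0 i : (i < size ds)%N ->
  0 < Kseq C Cs K ds i (nth x0 ds i) (nth x0 ds i).
Proof.
move=> ids; have [Sinv Ssym _] := Kseq_invariant (ltnW ids).
have [dU _] := remaining_succ x0 ids.
exact: inverse_on_diag_pos (posdef_invmx KMplus.1) Sinv Ssym dU.
Qed.

Lemma Kseq_final : subCC C (Kseq C Cs K ds (size ds)) = invmx (subCC C (invmx K)).
Proof.
have [Sinv _ _] := Kseq_invariant (leqnn _); apply: subCC_inverse_on.
have remainingC : remaining (size ds) = C.
  by apply/setP => x; rewrite take_size !inE ds_mem negbK.
by rewrite remainingC in Sinv.
Qed.
End Elimination.

(* The argument only uses that G^* is a symmetric supergraph of G with perfect
   sequence C^*_1, ..., C^*_M and C contained in C^*_1. *)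
Theorem mainTheorem1 (R : realFieldType) (n : nat)
  (e : rel 'I_n) (K : 'M[R]_n) (C : {set 'I_n})
  (e' : rel 'I_n) (Cs : seq {set 'I_n}) (ds : seq 'I_n) :
  simple_graph e -> connected_graph e ->
  in_Mplus e K ->
  maximal_clique e C ->
  chordal_extension e e' ->
  perfect_sequence e' Cs ->
  C \subset Cst Cs 0 ->
  uniq ds ->
  (forall x, (x \in ds) = (x \notin C)) ->
  pairwise (fun x y => (blk C Cs y <= blk C Cs x)%N) ds ->
  (forall (i : nat) (d : 'I_n), (i < size ds)%N ->
      0 < Kseq C Cs K ds i (nth d ds i) (nth d ds i)) /\
  subCC C (Kseq C Cs K ds (size ds)) = invmx (subCC C (invmx K)).
Proof.
move=> _ _ KMplus _ [[sym_e' _] [sub_e _]] perfectCs C_first uniq_ds ds_mem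
  ds_order.
split=> [i d|].
- exact: Kseq_pivot_pos KMplus sub_e sym_e' perfectCs C_first uniq_ds ds_mem
    ds_order d i.
- exact: Kseq_final KMplus sub_e sym_e' perfectCs C_first uniq_ds ds_mem
    ds_order.
Qed.
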